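(* Let $M$ be a magma satisfying $(xy)z = xz$ and $x(yz) = xz$ for all $x,y,z\in M$. Then $M$ satisfies the identities $(xy)z = x(yz)$ and $x(yx) = x$ for all $x,y,z\in M$ (i.e. $M$ is a rectangular band) if and only if $M$ avoids the $2$-element null semigroup $2_N$ on $\{0,1\}$ with Cayley table \[ \begin{array}{c|cc} 2_{N} & 0 & 1 \\ \hline 0 & 0 & 0 \\ 1 & 0 & 0 \end{array}. \]
   Context: A magma is a nonempty set with a binary operation, written by juxtaposition. A magma $M$ avoids a magma $F$ if no submagma of $M$ is isomorphic to $F$. *)

(* The 2-element null semigroup 2_N on {0,1}, encoded as bool
   (false = 0, true = 1): every product is 0. *)
Definition null2 (a b : bool) : bool := false.

Definition is_submagma {T : Type} (op : T -> T -> T) (S : T -> Prop) : Prop :=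
  (exists x, S x) /\ (forall x y, S x -> S y -> S (op x y)).

Definition has_submagma_iso {U T : Type} (opU : U -> U -> U)
    (op : T -> T -> T) : Prop :=
  exists S : T -> Prop, is_submagma op S /\
    exists f : U -> T,
      (forall u, S (f u)) /\
      (forall u v, f u = f v -> u = v) /\
      (forall x, S x -> exists u, f u = x) /\
      (forall u v, f (opU u v) = op (f u) (f v)).

Definition avoids {U T : Type} (opU : U -> U -> U) (op : T -> T -> T) : Prop :=
  ~ has_submagma_iso opU op.

From Stdlib Require Import Classical.

(* Both identities say that a product only depends on its outer factors, so
   [(xy)z = x(yz)] holds automatically and [x(yx) = xx]: being a rectangular
   band amounts to being idempotent.  A copy of 2_N contains an element [a]
   with [aa <> a]; conversely, if [xx <> x] then [{x, xx}] is closed and every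
   product in it equals [xx], which is a copy of 2_N. *)

Lemma null2_copy_not_idempotent {T : Type} (op : T -> T -> T) :
  has_submagma_iso null2 op -> exists a, op a a <> a.
Proof.
  intros [S [_ [f [_ [f_inj [_ f_hom]]]]]].
  exists (f true). intros E.
  rewrite <- f_hom in E.
  discriminate (f_inj _ _ E).
Qed.

Section OuterFactors.

Variables (T : Type) (op : T -> T -> T).
Hypothesis h1 : forall x y z : T, op (op x y) z = op x z.
Hypothesis h2 : forall x y z : T, op x (op y z) = op x z.

Lemma op_assoc (x y z : T) : op (op x y) z = op x (op y z).
Proof. now rewrite h1, h2. Qed.

Lemma idempotent_absorb (x y : T) : op x x = x -> op x (op y x) = x.
Proof. now rewrite h2. Qed.

Lemma mul_square_pair (x u v : T) :
  (u = op x x \/ u = x) -> (v = op x x \/ v = x) -> op u v = op x x.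
Proof. intros [-> | ->] [-> | ->]; now rewrite ?h1, ?h2, ?h1. Qed.

Lemma not_idempotent_null2_copy (x : T) :
  op x x <> x -> has_submagma_iso null2 op.
Proof.
  intros Hx.
  set (pair := fun t => t = op x x \/ t = x).
  exists pair. split.
  - split.
    + exists x. now right.
    + intros u v Hu Hv. left. now apply mul_square_pair.
  - exists (fun b : bool => if b then x else op x x).
    split; [| split; [| split]].
    + intros []; unfold pair; auto.
    + intros [] [] E; auto; now contradiction Hx.
    + intros t [-> | ->]; [exists false | exists true]; reflexivity.
    + intros u v. symmetry.
      apply mul_square_pair; destruct u, v; auto.
Qed.

Lemma avoids_null2_idempotent : avoids null2 op -> forall x : T, op x x = x.
Proof.
  intros Hav x.
  apply NNPP. intros Hx.
  exact (Hav (not_idempotent_null2_copy x Hx)).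
Qed.

End OuterFactors.

Theorem mainTheorem2 (T : Type) (op : T -> T -> T) (hne : inhabited T)
  (h1 : forall x y z : T, op (op x y) z = op x z)
  (h2 : forall x y z : T, op x (op y z) = op x z) :
  ((forall x y z : T, op (op x y) z = op x (op y z)) /\
   (forall x y : T, op x (op y x) = x))
  <-> avoids null2 op.
Proof.
  split.
  - intros [_ absorb] Hcopy.
    destruct (null2_copy_not_idempotent op Hcopy) as [a Ha].
    apply Ha. rewrite <- (h2 a a a). apply absorb.
  - intros Hav.
    pose proof (avoids_null2_idempotent T op h1 h2 Hav) as idem.
    split.
    + exact (op_assoc T op h1 h2).
    + intros x y. exact (idempotent_absorb T op h2 x y (idem x)).
Qed.
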